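(* Let $G$ be a chordal graph, $p:\wp(V_G)\to\mathbb R$ a $G$-polymatroidal function, and $v_1,\dots,v_n$ an elimination ordering for $G$. For each $i$ let $N_i$ be the set of neighbors of $v_i$ among $v_1,\dots,v_{i-1}$. Then \[ p(V_G)=\sum_{S\subseteq \mathsf{MaxCliques}(G)} -(-1)^{|S|}\,p\big({\textstyle\bigcap}S\big) = \sum_{i=1}^n \Big(p(N_i\cup\{v_i\})-p(N_i)\Big). \]
   Context: Graphs are finite directed graphs; the underlying simple graph $\bar G$ has edges $\{v,w\}$, $v\neq w$, with $(v,w)$ or $(w,v)$ in $E_G$, and cliques, neighbors, chordality, separation refer to $\bar G$. $\mathsf{MaxCliques}(G)$ is the set of maximal cliques; $\bigcap S$ is the intersection of the family $S$, with $\bigcap\emptyset=\emptyset$. $G$ is chordal if $\bar G$ has no induced cycle of length $\ge4$. A vertex is eliminable in $G$ if its neighborhood is a clique; an enumeration $v_1,\dots,v_n$ of $V_G$ is an elimination ordering if $v_j$ is eliminable in the induced subgraph on $\{v_1,\dots,v_j\}$ for each $j$. A function $p:\wp(V_G)\to\mathbb R$ is $G$-polymatroidal if $p(\emptyset)=0$; $p(A)\le p(B)$ for $A\subseteq B$; $p(A\cap B)+p(A\cup B)\le p(A)+p(B)$ for all $A,B$; and $p(A\cap B)+p(A\cup B)=p(A)+p(B)$ whenever there is no edge of $\bar G$ between $A\setminus B$ and $B\setminus A$. *)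

From HB Require Import structures.
From mathcomp Require Import all_boot all_order all_algebra.
Set Implicit Arguments. Unset Strict Implicit. Unset Printing Implicit Defensive.
Import Order.TTheory GRing.Theory Num.Theory.

Section Graphs.
Variable T : finType.
Variable E : rel T.

(* adjacency in the underlying simple graph *)
Definition adj (v w : T) : bool := (v != w) && (E v w || E w v).

Definition is_clique (A : {set T}) : bool :=
  [forall v in A, forall w in A, (v != w) ==> adj v w].

Definition MaxCliques : {set {set T}} :=
  [set A : {set T} | is_clique A &
     [forall B : {set T}, (is_clique B && (A \subset B)) ==> (B == A)]].

Definition induced_cycle (s : seq T) : bool :=
  [&& uniq s, 4 <= size s &
    [forall i : 'I_(size s), forall j : 'I_(size s),
       adj (tnth (in_tuple s) i) (tnth (in_tuple s) j) ==
       ((i.+1 %% size s == j) || (j.+1 %% size s == i))]].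

Definition chordal : Prop := forall s : seq T, ~~ induced_cycle s.

Definition eliminable_in (U : {set T}) (v : T) : bool :=
  is_clique [set w in U | adj v w].

(* v : 'I_n -> T enumerates V_G (v i is v_{i+1} of the paper) *)
Definition elimination_ordering (n : nat) (v : 'I_n -> T) : Prop :=
  bijective v /\
  forall i : 'I_n, eliminable_in [set v j | j : 'I_n & j <= i] (v i).

Definition Nbefore (n : nat) (v : 'I_n -> T) (i : 'I_n) : {set T} :=
  [set v j | j : 'I_n & (j < i) && adj (v i) (v j)].

Local Open Scope ring_scope.
Definition polymatroidal (R : realFieldType) (p : {set T} -> R) : Prop :=
  [/\ p set0 = 0,
      (forall A B : {set T}, A \subset B -> p A <= p B),
      (forall A B : {set T}, p (A :&: B) + p (A :|: B) <= p A + p B) &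
      (forall A B : {set T},
         (forall x y, x \in A :\: B -> y \in B :\: A -> ~~ adj x y) ->
         p (A :&: B) + p (A :|: B) = p A + p B)].

End Graphs.

(* intersection of a family, with the empty family giving the empty set *)
Definition bigcapS (T : finType) (S : {set {set T}}) : {set T} :=
  if S == set0 then set0 else \bigcap_(A in S) A.

From HB Require Import structures.
From mathcomp Require Import all_boot all_order all_algebra.
Set Implicit Arguments. Unset Strict Implicit. Unset Printing Implicit Defensive.
Import Order.TTheory GRing.Theory Num.Theory.
Local Open Scope ring_scope.

(* Let U_k = {v_1, ..., v_k}, so that U_{k+1} = U_k + v_{k+1} and N_{k+1} is
   the neighbourhood of v_{k+1} in U_k.  Since N_{k+1} is a clique separating
   v_{k+1} from the rest of U_k, modularity of p gives
   p(U_{k+1}) - p(U_k) = p(N_{k+1} + v_{k+1}) - p(N_{k+1}).  On the other side,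
   the maximal cliques of the graph induced on U_{k+1} are those of U_k, with
   N_{k+1} (if it was maximal) replaced by N_{k+1} + v_{k+1}; the
   inclusion-exclusion sum over maximal cliques grows by the same amount.
   Both sides therefore telescope to the same value. *)

Section PowersetSums.
Variables (R : zmodType) (aT : finType).

Lemma big_powersetU1 (phi : {set aT} -> R) (y : aT) (F : {set aT}) :
  y \notin F ->
  \sum_(S in powerset (y |: F)) phi S =
  \sum_(S in powerset F) (phi S + phi (y |: S)).
Proof.
move=> yF; rewrite big_split /= (bigID (fun S : {set aT} => y \in S)) /= addrC.
congr (_ + _).
  apply: eq_bigl => S; rewrite !powersetE; apply/andP/idP => [[sS yS]|sS].
    apply/subsetP => x xS; have /setU1P[ex|//] := subsetP sS x xS.
    by rewrite -ex xS in yS.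
  rewrite (subset_trans sS (subsetUr _ _)); split=> //.
  by apply: contra yF => /(subsetP sS).
rewrite (reindex_onto (fun S => y |: S) (fun S => S :\ y)) /=; last first.
  by move=> S /andP[_ yS]; rewrite setD1K.
apply: eq_bigl => S; rewrite !powersetE setU11 andbT subUset sub1set setU11 /=.
apply/andP/idP => [[sS /eqP <-]|sS].
  apply/subsetP => x /setD1P[xy /setU1P[ex|/(subsetP sS)]].
    by rewrite ex eqxx in xy.
  by rewrite in_setU1 (negbTE xy).
have yS : y \notin S by apply: contra yF => /(subsetP sS).
by rewrite setU1K // (subset_trans sS (subsetUr _ _)).
Qed.

End PowersetSums.

Section InclusionExclusion.
Variables (R : pzRingType) (T : finType) (p : {set T} -> R).

Definition ie_sum (F : {set {set T}}) : R :=
  \sum_(S in powerset F) - ((-1) ^+ #|S| * p (bigcapS S)).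

Definition capped_sum (F : {set {set T}}) (X : {set T}) : R :=
  \sum_(S in powerset F) (-1) ^+ #|S| * p (X :&: \bigcap_(A in S) A).

Lemma bigcapS_setU1 (X : {set T}) (S : {set {set T}}) :
  bigcapS (X |: S) = X :&: \bigcap_(A in S) A.
Proof.
rewrite /bigcapS bigcap_setU big_set1; case: eqP => // XS0.
by have := setU11 X S; rewrite XS0 inE.
Qed.

Lemma ie_sum_setU1 (F : {set {set T}}) (X : {set T}) :
  X \notin F -> ie_sum (X |: F) = ie_sum F + capped_sum F X.
Proof.
move=> XF; rewrite /ie_sum big_powersetU1 // big_split; congr (_ + _).
apply: eq_bigr => S; rewrite powersetE => sS.
have XS : X \notin S by apply: contra XF => /(subsetP sS).
by rewrite bigcapS_setU1 cardsU1 XS exprS mulN1r mulNr opprK.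
Qed.

Lemma capped_sum_setU1 (F : {set {set T}}) (X Y : {set T}) :
  Y \notin F -> capped_sum (Y |: F) X = capped_sum F X - capped_sum F (X :&: Y).
Proof.
move=> YF; rewrite /capped_sum big_powersetU1 // big_split /= -sumrN.
congr (_ + _); apply: eq_bigr => S; rewrite powersetE => sS.
have YS : Y \notin S by apply: contra YF => /(subsetP sS).
by rewrite bigcap_setU big_set1 setIA cardsU1 YS exprS mulN1r mulNr.
Qed.

Lemma capped_sum_eq0 (F : {set {set T}}) (X K : {set T}) :
  K \in F -> X \subset K -> capped_sum F X = 0.
Proof.
move=> KF XK; rewrite -(setD1K KF) capped_sum_setU1 ?setD11 //.
by rewrite (setIidPl XK) subrr.
Qed.

Lemma ie_sum_setU1_sub (F : {set {set T}}) (X K : {set T}) :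
  K \in F -> X \subset K -> ie_sum (X |: F) = ie_sum F.
Proof.
move=> KF XK; have [XF|XF] := boolP (X \in F); first by rewrite (setUidPr _) // sub1set.
by rewrite ie_sum_setU1 // (capped_sum_eq0 KF XK) addr0.
Qed.

Lemma capped_sum_congr (F : {set {set T}}) (X Y : {set T}) :
  {in F, forall K, X :&: K = Y :&: K} ->
  capped_sum F X - p X = capped_sum F Y - p Y.
Proof.
move=> eqXY; rewrite /capped_sum.
rewrite (bigD1 set0) 1?[in RHS](bigD1 set0) ?powersetE ?sub0set //=.
rewrite !big_set0 cards0 expr0 !mul1r !setIT ![p _ + _]addrC !addrK.
apply: eq_bigr => S /andP[]; rewrite powersetE => sS /set0Pn[K KS].
have capK : \bigcap_(A in S) A = K :&: \bigcap_(A in S) A.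
  by apply/esym/setIidPr; apply: bigcap_inf.
by rewrite capK !setIA eqXY // (subsetP sS).
Qed.

End InclusionExclusion.

Section Cliques.
Variables (T : finType) (E : rel T).

Lemma adjC x y : adj E x y = adj E y x.
Proof. by rewrite /adj eq_sym orbC. Qed.

Lemma adjxx x : adj E x x = false.
Proof. by rewrite /adj eqxx. Qed.

Lemma cliqueP (B : {set T}) :
  reflect {in B &, forall x y, x != y -> adj E x y} (is_clique E B).
Proof.
apply: (iffP forallP) => [cB x y xB yB|cB x].
  by have /implyP/(_ xB)/forallP/(_ y)/implyP/(_ yB)/implyP := cB x.
apply/implyP => xB; apply/forallP => y; apply/implyP => yB; apply/implyP.
exact: cB.
Qed.

Definition clique_in (U : {set T}) : pred {set T} :=
  fun B => (B \subset U) && is_clique E B.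

Definition maxcliques_in (U : {set T}) : {set {set T}} :=
  [set A | maxset (clique_in U) A].

Lemma maxcliques_in_sub (U A : {set T}) : A \in maxcliques_in U -> A \subset U.
Proof. by rewrite inE => /maxsetp /andP[]. Qed.

Lemma maxcliques_inT : maxcliques_in setT = MaxCliques E.
Proof.
apply/setP => A; rewrite !inE /clique_in.
apply/maxsetP/andP => [[/andP[_ cA] maxA]|[cA /forallP maxA]].
  split=> //; apply/forallP => B; apply/implyP => /andP[cB AB].
  by apply/eqP; apply: maxA; rewrite ?subsetT.
split=> [|B /andP[_ cB] AB]; first by rewrite subsetT.
by apply/eqP; move/implyP: (maxA B); apply; rewrite cB.
Qed.

Lemma maxcliques_in0 : maxcliques_in set0 = [set set0].
Proof.
apply/setP => A; rewrite !inE /clique_in.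
apply/maxsetP/eqP => [[/andP[A0 _] _]|->]; first by apply/eqP; rewrite -subset0.
split=> [|B /andP[]]; last by rewrite subset0 => /eqP.
by rewrite sub0set; apply/cliqueP => x y; rewrite inE.
Qed.

(* The junk value bigcapS set0 = set0 makes the two terms cancel. *)
Lemma ie_sum_maxcliques_in0 (R : pzRingType) (p : {set T} -> R) :
  ie_sum p (maxcliques_in set0) = 0.
Proof.
rewrite maxcliques_in0 -[[set set0]]setU0 ie_sum_setU1 ?inE //.
rewrite /ie_sum /capped_sum powerset0 !big_set1 cards0 /bigcapS eqxx big_set0.
by rewrite expr0 !mul1r setIT addNr.
Qed.

Section AddVertex.
Variables (U : {set T}) (v : T).
Hypothesis vU : v \notin U.
Let N := [set w in U | adj E v w].
Let C := v |: N.

Lemma nbhd_sub : N \subset U.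
Proof. by apply/subsetP => x; rewrite inE => /andP[]. Qed.

Lemma nbhd_notin : v \notin N.
Proof. by rewrite inE adjxx andbF. Qed.

Lemma closed_nbhd_capE (K : {set T}) : K \subset U -> C :&: K = N :&: K.
Proof.
move=> KU; apply/setP => x; rewrite !inE; case: eqP => [->|_] //=.
by rewrite (contraNF (subsetP KU v)) ?andbF.
Qed.

Lemma clique_in_setU1 (B : {set T}) :
  v \notin B -> clique_in (v |: U) B = clique_in U B.
Proof.
move=> vB; rewrite /clique_in; congr (_ && _); apply/idP/idP => BU.
  apply/subsetP => x xB; have /setU1P[ex|//] := subsetP BU x xB.
  by rewrite -ex xB in vB.
exact: subset_trans BU (subsetUr _ _).
Qed.

Lemma clique_in_sub_closed_nbhd (B : {set T}) :
  v \in B -> clique_in (v |: U) B -> B \subset C.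
Proof.
move=> vB /andP[BU /cliqueP cB]; apply/subsetP => w wB.
have [->|wv] := eqVneq w v; first exact: setU11.
apply/setU1r; rewrite inE adjC cB // andbT.
by have /setU1P[ew|//] := subsetP BU w wB; rewrite ew eqxx in wv.
Qed.

Lemma polymatroidal_setU1 (R : realFieldType) (p : {set T} -> R) :
  polymatroidal E p -> p (v |: U) = p U + p C - p N.
Proof.
case=> _ _ _ p_modular.
have capE : U :&: C = N by rewrite setIC closed_nbhd_capE // (setIidPl nbhd_sub).
have cupE : U :|: C = v |: U by rewrite setUCA (setUidPl nbhd_sub).
have <- : p (U :&: C) + p (U :|: C) = p U + p C.
  apply: p_modular => x y; rewrite !inE => /andP[xN xU] /andP[yU].
  case/orP => [/eqP ->|/andP[yU']]; last by rewrite yU' in yU.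
  by rewrite adjC; apply: contra xN => ->; rewrite xU orbT.
by rewrite capE cupE [p N + _]addrC addrK.
Qed.

Hypothesis cN : is_clique E N.

Lemma clique_in_nbhd : clique_in U N.
Proof. by rewrite /clique_in nbhd_sub cN. Qed.

Lemma clique_in_closed_nbhd : clique_in (v |: U) C.
Proof.
rewrite /clique_in setUS ?nbhd_sub //; apply/cliqueP.
move=> x y /setU1P[->|xN] /setU1P[->|yN] xy.
- by rewrite eqxx in xy.
- by move: yN; rewrite inE => /andP[].
- by rewrite adjC; move: xN; rewrite inE => /andP[].
- exact: (cliqueP _ cN).
Qed.

Lemma closed_nbhd_maxclique : C \in maxcliques_in (v |: U).
Proof.
rewrite inE; apply/maxsetP; split=> [|B clB CB]; first exact: clique_in_closed_nbhd.
apply/eqP; rewrite eqEsubset CB clique_in_sub_closed_nbhd //.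
exact: (subsetP CB) (setU11 _ _).
Qed.

Lemma maxcliques_in_setU1 : maxcliques_in (v |: U) = C |: (maxcliques_in U :\ N).
Proof.
apply/setP => A; rewrite !inE; apply/idP/idP => [maxA|].
  have clA := maxsetp maxA; have [vA|vA] := boolP (v \in A).
    have AC := clique_in_sub_closed_nbhd vA clA.
    by rewrite (maxsetsup maxA clique_in_closed_nbhd AC) eqxx.
  have maxA' : maxset (clique_in U) A.
    rewrite clique_in_setU1 // in clA; apply/maxsetP; split=> // B clB AB.
    apply: (maxsetsup maxA) AB; move: clB; rewrite /clique_in => /andP[BU ->].
    by rewrite (subset_trans BU (subsetUr _ _)).
  rewrite maxA' andbT; apply/orP; right; apply: contra vA => /eqP AN.
  have := maxsetsup maxA clique_in_closed_nbhd; rewrite AN subsetUr => /(_ isT) CN.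
  by rewrite -CN setU11.
case/orP => [/eqP ->|/andP[AN maxA]]; first by move: closed_nbhd_maxclique; rewrite inE.
have /andP[AU _] := maxsetp maxA.
have vA : v \notin A by apply: contra vU => /(subsetP AU).
apply/maxsetP; split=> [|B clB AB]; first by rewrite clique_in_setU1 // (maxsetp maxA).
have [vB|vB] := boolP (v \in B).
  have AC := subset_trans AB (clique_in_sub_closed_nbhd vB clB).
  have AN' : A \subset N.
    apply/subsetP => x xA; have /setU1P[ex|//] := subsetP AC x xA.
    by rewrite -ex xA in vA.
  by rewrite (maxsetsup maxA clique_in_nbhd AN') eqxx in AN.
by apply: (maxsetsup maxA) AB; rewrite -clique_in_setU1.
Qed.

Lemma ie_sum_maxcliques_in_setU1 (R : pzRingType) (p : {set T} -> R) :
  ie_sum p (maxcliques_in (v |: U)) = ie_sum p (maxcliques_in U) + p C - p N.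
Proof.
set F := maxcliques_in U; set F0 := F :\ N.
have NC : N \subset C by apply: subsetUr.
have F0_sub K : K \in F0 -> K \subset U by move=> /setD1P[_ /maxcliques_in_sub].
have CNF0 : C \notin N |: F0.
  rewrite in_setU1 negb_or eq_sym; apply/andP; split.
    by apply: contraNneq nbhd_notin => ->; apply: setU11.
  by apply: contraNN vU => /F0_sub/subsetP; apply; apply: setU11.
have capped_C : capped_sum p (N |: F0) C = p C - p N.
  rewrite capped_sum_setU1 ?setD11 // (setIidPr NC).
  have := @capped_sum_congr _ _ p F0 C N (fun K KF0 => closed_nbhd_capE (F0_sub K KF0)).
  move/(canRL (subrK _)) ->.
  by rewrite addrAC (addrAC (capped_sum _ _ _)) subrr add0r addrC.
rewrite -(ie_sum_setU1_sub p closed_nbhd_maxclique NC) maxcliques_in_setU1.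
rewrite setUCA ie_sum_setU1 // capped_C addrA.
have -> : N |: F0 = N |: F by apply/setP => X; rewrite !inE; case: eqP.
have [K maxK NK] := maxset_exists clique_in_nbhd.
by rewrite (ie_sum_setU1_sub p _ NK) // inE.
Qed.

End AddVertex.
End Cliques.

Section EliminationOrdering.
Variables (T : finType) (E : rel T) (n : nat) (v : 'I_n -> T).
Hypothesis elimv : elimination_ordering E v.

Definition prefix (k : nat) : {set T} := [set v j | j : 'I_n & (j < k)%N].

Lemma prefix0 : prefix 0 = set0.
Proof. by apply/setP => x; rewrite inE; apply/imsetP => -[j]; rewrite inE ltn0. Qed.

Lemma prefix_all : prefix n = setT.
Proof.
case: elimv => -[w vw wv] _; apply/setP => x; rewrite inE.
by apply/imsetP; exists (w x); rewrite ?wv // inE ltn_ord.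
Qed.

Lemma prefixS (i : 'I_n) : prefix i.+1 = v i |: prefix i.
Proof.
apply/setP => x; rewrite in_setU1; apply/imsetP/idP.
  case=> j; rewrite inE ltnS leq_eqVlt => /orP[/eqP/val_inj -> ->|ji ->].
    by rewrite eqxx.
  by apply/orP; right; apply/imsetP; exists j; rewrite ?inE.
case/orP => [/eqP ->|/imsetP[j]]; first by exists i; rewrite ?inE.
by rewrite inE => ji ->; exists j; rewrite // inE ltnW.
Qed.

Lemma prefix_notin (i : 'I_n) : v i \notin prefix i.
Proof.
case: elimv => /bij_inj vinj _.
by apply/imsetP => -[j]; rewrite inE => + /vinj ji; rewrite ji ltnn.
Qed.

Lemma Nbefore_prefix (i : 'I_n) : Nbefore E v i = [set w in prefix i | adj E (v i) w].
Proof.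
apply/setP => x; rewrite inE; apply/imsetP/andP.
  case=> j; rewrite inE => /andP[ji adj_ij] ->; split=> //.
  by apply/imsetP; exists j; rewrite ?inE.
by case=> /imsetP[j]; rewrite inE => ji -> adj_ij; exists j; rewrite ?inE ?ji.
Qed.

Lemma clique_prefix_nbhd (i : 'I_n) : is_clique E [set w in prefix i | adj E (v i) w].
Proof.
case: elimv => _ /(_ i); rewrite /eliminable_in.
have -> : [set v j | j : 'I_n & (j <= i)%N] = v i |: prefix i.
  by rewrite -prefixS.
congr is_clique; apply/setP => x; rewrite !inE.
by case: eqP => [->|] //=; rewrite adjxx andbF.
Qed.

End EliminationOrdering.

Theorem lemma2p4 (R : realFieldType) (T : finType) (E : rel T)
  (p : {set T} -> R) (n : nat) (v : 'I_n -> T) :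
  chordal E -> polymatroidal E p -> elimination_ordering E v ->
  p [set: T] = \sum_(S in powerset (MaxCliques E)) - ((-1) ^+ #|S| * p (bigcapS S))
  /\ \sum_(S in powerset (MaxCliques E)) - ((-1) ^+ #|S| * p (bigcapS S))
     = \sum_(i < n) (p (v i |: Nbefore E v i) - p (Nbefore E v i)).
Proof.
(* Chordality follows from the existence of the elimination ordering. *)
move=> _ pm elimv; rewrite -[\sum_(S in _) _]/(ie_sum p (MaxCliques E)).
pose d (i : 'I_n) := p (v i |: Nbefore E v i) - p (Nbefore E v i).
have telescope (f : nat -> R) :
    (forall i : 'I_n, f i.+1 - f i = d i) -> \sum_(i < n) d i = f n - f 0.
  move=> fd; rewrite -(telescope_sumr f (leq0n n)) big_mkord.
  by apply: eq_bigr => i _; rewrite fd.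
have sum_p : \sum_(i < n) d i = p [set: T].
  rewrite (telescope (p \o prefix v)) => [|i] /=.
    by rewrite (prefix_all elimv) prefix0; case: pm => -> _ _ _; rewrite subr0.
  rewrite prefixS (polymatroidal_setU1 (prefix_notin elimv i) pm) /d Nbefore_prefix.
  by rewrite addrAC [p (prefix v i) + _]addrC addrK.
have sum_ie : \sum_(i < n) d i = ie_sum p (MaxCliques E).
  rewrite (telescope (fun k => ie_sum p (maxcliques_in E (prefix v k)))) => [|i].
    by rewrite (prefix_all elimv) prefix0 ie_sum_maxcliques_in0 subr0 maxcliques_inT.
  rewrite prefixS ie_sum_maxcliques_in_setU1 ?(prefix_notin elimv) //;
    last exact: clique_prefix_nbhd.
  by rewrite /d Nbefore_prefix addrAC [ie_sum p _ + _]addrC addrK.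
by split; [rewrite -sum_p sum_ie | exact: esym sum_ie].
Qed.
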